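(* In $\mathrm{Top}$, let $\iota:\emptyset\to\{\bullet\}$ and let $j:\{\bullet\}\to\{\bullet_1,\bullet_2\}$ be the inclusion of a point into the two-point discrete space. Then $\{\iota\}^{rll}=\{j\}^l$, and this class is the class of continuous maps $p:X\to Y$ such that the image $p(X)$ intersects every non-empty clopen subset of $Y$. In particular, if $\pi_0(Y)$ is finite, $p$ belongs to this class if and only if the induced map $\pi_0(p):\pi_0(X)\to\pi_0(Y)$ is surjective.
   Context: For morphisms $f:A\to B$, $g:C\to D$, $f\pitchfork g$ means: for all $t:A\to C$, $b:B\to D$ with $g\circ t=b\circ f$ there is $d:B\to C$ with $d\circ f=t$, $g\circ d=b$. For a class $P$ of morphisms, $P^l=\{f: f\pitchfork g\ \forall g\in P\}$, $P^r=\{g: f\pitchfork g\ \forall f\in P\}$, and $P^{w}$ for a word $w$ in $l,r$ means applying these operations from left to right (e.g. $P^{rll}=((P^r)^l)^l$). $\pi_0(X)$ denotes the set of connected components of $X$. *)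

From HB Require Import structures.
From mathcomp Require Import all_boot all_order all_algebra.
From mathcomp Require Import all_classical all_reals all_analysis.
Set Implicit Arguments. Unset Strict Implicit. Unset Printing Implicit Defensive.
Local Open Scope classical_set_scope.

Record Mor := MkMor {
  mdom : topologicalType;
  mcod : topologicalType;
  morfun : mdom -> mcod;
  mcont : continuous morfun }.
Arguments morfun : clear implicits.

Definition MorClass := Mor -> Prop.

Definition lifts (f g : Mor) : Prop :=
  forall (t : mdom f -> mdom g) (b : mcod f -> mcod g),
    continuous t -> continuous b ->
    morfun g \o t = b \o morfun f ->
    exists d : mcod f -> mdom g,
      [/\ continuous d, d \o morfun f = t & morfun g \o d = b].

Definition lorth (P : MorClass) : MorClass := fun f => forall g, P g -> lifts f g.
Definition rorth (P : MorClass) : MorClass := fun g => forall f, P f -> lifts f g.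

Definition singleton_class (m : Mor) : MorClass := fun f => f = m.

Definition Empty : topologicalType := discrete_topology void.
Definition Pt : topologicalType := discrete_topology unit.
Definition Two : topologicalType := discrete_topology bool.

Lemma iota_cont : continuous (fun x : Empty => (match x with end : Pt)).
Proof. by case. Qed.

Lemma j_cont : continuous (fun _ : Pt => (true : Two)).
Proof. by move=> x; apply: cvg_cst. Qed.

Definition iota_empty : Mor := MkMor iota_cont.
Definition j_pt : Mor := MkMor j_cont.

Definition pi0 (X : topologicalType) (x : X) : set X := connected_component setT x.

From Pilot Require Import Defs.
From HB Require Import structures.
From mathcomp Require Import all_boot all_order all_algebra.
From mathcomp Require Import all_classical all_reals all_analysis.
Set Implicit Arguments. Unset Strict Implicit. Unset Printing Implicit Defensive.
Local Open Scope classical_set_scope.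

(* The maps with the right lifting property against iota are the surjections,
   and j lifts against every surjection; hence {iota}^rll is contained in {j}^l.
   A map f lifts against j exactly when every clopen set containing the image
   of f is the whole codomain.  Conversely, a map g lifting against all
   surjections lifts against the codiagonal dom g + cod g -> cod g; the lift of
   the identity shows that the range of g is clopen and yields a continuous
   retraction r of g.  A square from such an f to such a g is then filled by
   r \o b, because b^-1(range g) is a clopen set containing the image of f.
   When pi_0(Y) is finite every component of Y is clopen, while every clopen
   set is a union of components; this gives the description in terms of pi_0. *)

Definition meets_clopens {X Y : topologicalType} (p : X -> Y) : Prop :=
  forall C : set Y, C !=set0 -> open C -> closed C -> exists x, C (p x).

Lemma meets_clopensP (X Y : topologicalType) (p : X -> Y) :
  meets_clopens p <-> forall C : set Y, clopen C -> range p `<=` C -> C = setT.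
Proof.
split=> [pC C clC pC_sub | Ccover C [y Cy] oC cC].
- apply/seteqP; split=> // y _; apply: contrapT => nCy.
  have [x nCpx] := pC (~` C) (ex_intro _ y nCy) (closed_openC (proj2 clC))
    (open_closedC (proj1 clC)).
  by apply: nCpx; apply: pC_sub; exists x.
- apply: contrapT => /forallNP nC.
  have /seteqP[_ /(_ y I)] // : ~` C = setT.
  by apply: Ccover; [exact: clopenC | move=> _ [x _ <-]; exact: nC].
Qed.

Lemma discrete_continuous (X : discreteTopologicalType) (Y : topologicalType)
    (f : X -> Y) : continuous f.
Proof.
move=> x U /= fxU; apply: filterS (discrete_set1 x) => _ ->.
exact: nbhs_singleton fxU.
Qed.

Lemma clopen_discrete (X : discreteTopologicalType) (A : set X) : clopen A.
Proof. by split; [exact: discrete_open | exact: discrete_closed]. Qed.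

Lemma asbool_continuous (Y : topologicalType) (C : set Y) :
  clopen C -> continuous (fun y => `[< C y >] : Two).
Proof.
move=> [oC cC] y; apply/(@discrete_cvg Two) => /=.
have [Cy | nCy] := pselect (C y).
- by apply: filterS (open_nbhs_nbhs (conj oC Cy)) => z Cz /=; rewrite !asboolT.
- apply: filterS (open_nbhs_nbhs (conj (closed_openC cC) nCy)) => z nCz /=.
  by rewrite !asboolF.
Qed.

Lemma projT1_continuous (I : choiceType) (X : I -> topologicalType) :
  continuous (fun p : {i & X i} => projT1 p : discrete_topology I).
Proof.
apply: (@sigT_continuous _ _ _ (fun i _ => i : discrete_topology I)) => i.
by move=> ?; exact: cvg_cst.
Qed.

Lemma connected_sub_clopen (T : topologicalType) (A C : set T) (x : T) :
  connected A -> clopen C -> A x -> C x -> A `<=` C.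
Proof.
move=> cA [oC cC] Ax Cx.
have AC : A `&` C = A by apply: cA; [exists x | exists C | exists C].
by rewrite -AC => y [].
Qed.

Lemma connected_component_open (T : topologicalType) (x : T) :
  finite_set (connected_component (@setT T) @` setT) ->
  open (connected_component setT x).
Proof.
move=> fin.
have -> : connected_component setT x =
    ~` \bigcup_(K in [set K | (connected_component setT @` setT) K /\ ~ K x]) K.
  apply/seteqP; split=> [z xz [_ [[w _ <-] nwx] wz] | z nz].
    rewrite (same_connected_component wz) -(same_connected_component xz) in nwx.
    by apply: nwx; exact: connected_component_refl.
  apply: connected_component_sym; apply: contrapT => nzx; apply: nz.
  by exists (connected_component setT z);
    [split; [exists z|] | exact: connected_component_refl].
apply/closed_openC/closed_bigcup; first by apply: sub_finite_set fin => K [].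
by move=> _ [[w _ <-] _]; exact: component_closed closedT.
Qed.

Lemma meets_clopens_componentsP (X Y : topologicalType) (p : X -> Y) :
  finite_set (connected_component (@setT Y) @` setT) ->
  meets_clopens p <->
  forall y, exists x, connected_component setT (p x) = connected_component setT y.
Proof.
move=> fin; split=> [pC y | pK C [y Cy] oC cC].
- have [|||x yx] := pC (connected_component setT y).
  + by exists y; exact: connected_component_refl.
  + exact: connected_component_open.
  + exact: component_closed closedT.
  + by exists x; rewrite (same_connected_component yx).
- have [x xy] := pK y; exists x.
  have yC : connected_component setT y `<=` C.
    exact: connected_sub_clopen (@component_connected _ setT y) (conj oC cC)
      (connected_component_refl I) Cy.
  by apply: yC; rewrite -xy; exact: connected_component_refl.
Qed.

Lemma rorth_iota_emptyP (g : Mor) :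
  rorth (singleton_class iota_empty) g <-> forall y, exists x, morfun g x = y.
Proof.
split=> [gRLP y | gsurj _ -> t b _ _ _].
- have [|d [_ _ /(congr1 (fun h => h tt)) gdy]] :=
    gRLP _ erefl (fun v : Defs.Empty => match v with end) (fun _ : Pt => y)
      (fun v => match v with end) (fun _ => cvg_cst _).
    by apply/funext => -[].
  by exists (d tt).
- have [x gx] := gsurj (b tt).
  exists (fun _ => x).
  by split; [exact: discrete_continuous | apply/funext => -[] | apply/funext => -[]].
Qed.

Lemma j_pt_lorth_surjective : lorth (rorth (singleton_class iota_empty)) j_pt.
Proof.
move=> g /rorth_iota_emptyP gsurj t b _ _ /(congr1 (fun h => h tt)) gtb.
have [c gc] := gsurj (b false).
exists (fun z : Two => if z then t tt else c).
by split; [exact: discrete_continuous | apply/funext => -[] | apply/funext => -[]].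
Qed.

Lemma lorth_j_ptP (f : Mor) :
  lorth (singleton_class j_pt) f <-> meets_clopens (morfun f).
Proof.
split=> [fLLP | /meets_clopensP fC _ -> t b _ cb ftb].
- apply/meets_clopensP => C clC fC; apply/seteqP; split=> // y _.
  have [|d [_ _ /(congr1 (fun h => h y)) /= jdy]] :=
    fLLP j_pt erefl (fun _ => tt) _ (fun _ => cvg_cst _) (asbool_continuous clC).
    by apply/funext => x /=; rewrite asboolT //; apply: fC; exists x.
  by apply/asboolP; rewrite -jdy.
- have btrue : b @^-1` [set true] = setT.
    apply: fC; first exact: preimage_clopen (clopen_discrete _) cb.
    by move=> _ [x _ <-]; rewrite /= -[b _](congr1 (fun h => h x) ftb).
  exists (fun _ => tt); split; first by move=> ?; exact: cvg_cst.
    by apply/funext => x; case: (t x).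
  by apply/funext => y; have /seteqP[_ /(_ y I)] := btrue.
Qed.

Section codiagonal.
Variable g : Mor.

Definition dom_cod_summand (i : bool) : topologicalType :=
  if i then mcod g else mdom g.

Definition codiagonal_on (i : bool) : dom_cod_summand i -> mcod g :=
  if i as i return dom_cod_summand i -> mcod g then id else morfun g.

Definition codiagonal (p : {i & dom_cod_summand i}) : mcod g :=
  codiagonal_on (projT2 p).

Lemma codiagonal_continuous : continuous codiagonal.
Proof.
apply: (@sigT_continuous _ _ _ codiagonal_on) => -[].
  by move=> ?; exact: cvg_id.
exact: mcont.
Qed.

Definition codiagonal_mor : Mor := MkMor codiagonal_continuous.

Lemma lorth_surjective_clopen_retract (c0 : mdom g) :
  lorth (rorth (singleton_class iota_empty)) g ->
  clopen (range (morfun g)) /\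
  exists2 r : mcod g -> mdom g, continuous r & cancel (morfun g) r.
Proof.
move=> gLLP.
have codiag_surj : rorth (singleton_class iota_empty) codiagonal_mor.
  by apply/rorth_iota_emptyP => y; exists (existT _ true y).
have [|s [cs sg codiag_s]] :=
  gLLP _ codiag_surj (existT dom_cod_summand false) id
    (@existT_continuous _ _ false) (fun _ => cvg_id).
  by apply/funext.
have sgx x : s (morfun g x) = existT _ false x := congr1 (fun h => h x) sg.
have codiag_sy y : codiagonal (s y) = y := congr1 (fun h => h y) codiag_s.
have range_g : range (morfun g) =
    (fun y => projT1 (s y) : discrete_topology bool) @^-1` [set false].
  apply/seteqP; split=> [_ [x _ <-] | y /=]; first by rewrite /= sgx.
  case E : (s y) => [[] c] //= _; exists c => //.
  by rewrite -[y in RHS]codiag_sy E.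
split.
  rewrite range_g; apply: preimage_clopen (clopen_discrete _) _.
  by move=> y; apply: continuous_comp; [exact: cs | exact: projT1_continuous].
(* off the range of g, the retraction takes the arbitrary value c0 *)
pose retract_on (i : bool) : dom_cod_summand i -> mdom g :=
  if i as i return dom_cod_summand i -> mdom g then fun _ => c0 else id.
pose retract (p : {i & dom_cod_summand i}) := retract_on _ (projT2 p).
have retract_continuous : continuous retract.
  apply: (@sigT_continuous _ _ _ retract_on) => -[] /=.
    by move=> ?; exact: cvg_cst.
  by move=> ?; exact: cvg_id.
exists (retract \o s); last by move=> x; rewrite /= sgx.
by move=> y; apply: continuous_comp; [exact: cs | exact: retract_continuous].
Qed.

End codiagonal.

Lemma lifts_clopen_retract (f g : Mor) (r : mcod g -> mdom g) :
  meets_clopens (morfun f) -> clopen (range (morfun g)) ->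
  continuous r -> cancel (morfun g) r -> lifts f g.
Proof.
move=> /meets_clopensP fC clg cr gK t b _ cb gtb.
have gt x : morfun g (t x) = b (morfun f x) := congr1 (fun h => h x) gtb.
have b_range : b @^-1` range (morfun g) = setT.
  apply: fC; first exact: preimage_clopen clg cb.
  by move=> _ [x _ <-]; exists (t x).
exists (r \o b); split.
- by move=> y; apply: continuous_comp; [exact: cb | exact: cr].
- by apply/funext => x /=; rewrite -gt gK.
- apply/funext => y /=.
  have : (b @^-1` range (morfun g)) y by rewrite b_range.
  by case=> x _ /= <-; rewrite gK.
Qed.

Lemma lifts_of_empty_cod (f g : Mor) : (mcod f -> False) -> lifts f g.
Proof.
move=> emptyY t b _ _ _; exists (fun y => False_rect _ (emptyY y)).
split=> [y | | ]; first by case: (emptyY y).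
  by apply/funext => x; case: (emptyY (morfun f x)).
by apply/funext => y; case: (emptyY y).
Qed.

Lemma meets_clopens_lorth_lorth_rorth_iota (f : Mor) :
  meets_clopens (morfun f) ->
  lorth (lorth (rorth (singleton_class iota_empty))) f.
Proof.
move=> fC g gLLP t b ct cb gtb.
have [[y0] | emptyY] := pselect (inhabited (mcod f)); last first.
  by apply: lifts_of_empty_cod => // y; apply: emptyY.
have [x0 _] := fC setT (ex_intro _ y0 I) openT closedT.
have [clg [r cr gK]] := lorth_surjective_clopen_retract (t x0) gLLP.
exact: lifts_clopen_retract fC clg cr gK t b ct cb gtb.
Qed.

Theorem mainTheorem2 :
  (forall f : Mor,
      lorth (lorth (rorth (singleton_class iota_empty))) f <->
      lorth (singleton_class j_pt) f) /\
  (forall f : Mor,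
      lorth (singleton_class j_pt) f <->
      (forall C : set (mcod f), C !=set0 -> open C -> closed C ->
         exists x : mdom f, C (morfun f x))) /\
  (forall f : Mor,
      finite_set (pi0 (X:=mcod f) @` setT) ->
      (lorth (singleton_class j_pt) f <->
       (forall y : mcod f, exists x : mdom f, pi0 (morfun f x) = pi0 y))).
Proof.
split.
  move=> f; split=> [fLLP _ -> | /lorth_j_ptP].
    by apply: fLLP; exact: j_pt_lorth_surjective.
  exact: meets_clopens_lorth_lorth_rorth_iota.
split; first by move=> f; exact: lorth_j_ptP.
by move=> f fin; rewrite lorth_j_ptP; exact: meets_clopens_componentsP.
Qed.
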